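(* Fix a mode index $n$. Let $J_{1,n}$ be a complex structure on $\mathcal S_n^R$ that is positive with respect to $W$. Define $J_n=J_{1,n}\otimes I_{2,n}$ on $\mathcal H_n^R$, where $I_{2,n}$ is the identity on $\mathcal E_n^R$; concretely, for any basis $\{E_a\}$ of $\mathcal E_n$, $J_n\sum_a f_aE_a=\sum_a(J_{1,n}f_a)E_a$. Then: (i) $J_n$ is a complex structure on $\mathcal H_n^R$; (ii) $J_n$ is positive with respect to $w$; (iii) $J_n$ is invariant under the structural isometries, i.e. it commutes with the action $T(f(x^A)F(x^j))=f(x^A)\,(TF)(x^j)$ of every isometry $T$ of $(V_2,\gamma)$.
   Context: Setting: $V=V_1\times V_2$ with metric $g=\alpha\oplus(-S)\gamma$. - $(V_1,\alpha)$ is a $p$-dimensional Lorentzian manifold with coordinates $x^A$. - $(V_2,\gamma)$ is a $q$-dimensional compact connected Riemannian manifold with coordinates $x^i$. - $S>0$ is a smooth function on $V_1$. - Standing assumption: either $(V_1,\alpha)\approx\mathbb R\times(\text{compact})$, or $(V_1,\alpha)$ is globally hyperbolic and the solutions considered on $V_1$ arise from compactly supported Cauchy data. This makes the integrals below finite. Klein–Gordon equation and modes: - The Klein–Gordon equation is $(\nabla^2+m^2)\psi=0$ for $g$. - $\Delta_2$ is the Laplacian of $\gamma$, and $\lambda_n$ is the $n$-th eigenvalue of $-\Delta_2$. - $\mathcal E_n$ is the (finite-dimensional) eigenspace of $\lambda_n$, with positive scalar product $\langle F,H\rangle_2=\int_{V_2}F^*H\sqrt\gamma\,d^qx$. $\mathcal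 E_n^R$ denotes its real elements. - The mode space $\mathcal H_n$ consists of the solutions of the Klein–Gordon equation with $-\Delta_2\Phi=\lambda_n\Phi$. $\mathcal H_n^R$ denotes its real elements. - $\mathcal S_n$ (resp. $\mathcal S_n^R$) is the space of complex (resp. real) smooth functions $f$ on $V_1$ solving $(\Delta_1^\sharp+\lambda_nS^{-1}+m^2)f=0$, where $\Delta_1^\sharp f=|\alpha|^{-1/2}S^{-q/2}\partial_A(|\alpha|^{1/2}S^{q/2}\alpha^{AB}\partial_Bf)$. - One has $\mathcal H_n=\mathcal S_n\otimes\mathcal E_n$: every $\Phi\in\mathcal H_n$ is $\sum_af_aE_a$ with $f_a\in\mathcal S_n$ and $\{E_a\}$ a real orthonormal basis of $\mathcal E_n$. Skew forms: - On $\mathcal S_n^R$: $W(f,h)=\int_LS^{q/2}(f\alpha^{AB}\partial_Bh-h\alpha^{AB}\partial_Bf)\,dL_A$, where $L$ is any spacelike $(p-1)$-surface in $V_1$. This is independent of $L$. - $w$ is the restriction to $\mathcal H_n$ of $\varpi(\phi,\psi)=\int_\Sigma(\phi\nabla^\mu\psi-\psi\nabla^\mu\phi)\,d\Sigma_\mu$. - These forms satisfy $w(fF,hH)=W(f,h)\langle F,H\rangle_2$. Complex structures: - A complex structure is a real linear operator $J$ with $J^2=-1$. - $J$ is positive with respect to a skew form $w$ if $w(J\Phi,J\Psi)=w(\Phi,\Psi)$ for all $\Phi,\Psi$, and $w(\Phi,J\Phi)>0$ for all $\Phi\ne0$. *)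

From HB Require Import structures.
From mathcomp Require Import all_boot all_order all_algebra.
From mathcomp Require Import reals.
Set Implicit Arguments. Unset Strict Implicit. Unset Printing Implicit Defensive.
Import Order.TTheory GRing.Theory Num.Theory.
Local Open Scope ring_scope.

Section Defs.
Variable R : realType.

Definition skew_bilinear (V : lmodType R) (W : V -> V -> R) : Prop :=
  (forall x a u v, W x (a *: u + v) = a * W x u + W x v) /\ (forall x y, W x y = - W y x).

Definition complex_structure (V : lmodType R) (J : V -> V) : Prop :=
  linear J /\ (forall v, J (J v) = - v).

Definition positive_wrt (V : lmodType R) (w : V -> V -> R) (J : V -> V) : Prop :=
  (forall x y, w (J x) (J y) = w x y) /\ (forall x, x != 0 -> 0 < w x (J x)).

(* An element sum_a f_a E_a of H_n^R, {E_a}_{a<d} a real orthonormal basis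
   of E_n, is represented by its coefficient family (f_a)_a. *)
Definition modes (S : lmodType R) (d : nat) := {ffun 'I_d -> S}.

(* w(sum f_a E_a, sum h_b E_b) = sum_{a,b} W(f_a,h_b) <E_a,E_b>_2
                               = sum_a W(f_a,h_a)  (orthonormality) *)
Definition wform (S : lmodType R) (d : nat) (W : S -> S -> R)
  (Phi Psi : {ffun 'I_d -> S}) : R := \sum_(a < d) W (Phi a) (Psi a).

Definition Jtensor (S : lmodType R) (d : nat) (J1 : S -> S)
  (Phi : {ffun 'I_d -> S}) : {ffun 'I_d -> S} := [ffun a => J1 (Phi a)].

(* action of an isometry T of (V_2,gamma) on H_n^R: T E_a = sum_b O_{b a} E_b
   with O the (orthogonal) matrix of T restricted to E_n^R, so
   T (sum_a f_a E_a) = sum_b (sum_a O_{b a} f_a) E_b. *)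
Definition isom_act (S : lmodType R) (d : nat) (O : 'M[R]_d)
  (Phi : {ffun 'I_d -> S}) : {ffun 'I_d -> S} :=
  [ffun b => \sum_(a < d) O b a *: Phi a].
End Defs.

From HB Require Import structures.
From mathcomp Require Import all_boot all_order all_algebra.
From mathcomp Require Import reals.
Import Order.TTheory GRing.Theory Num.Theory.
Local Open Scope ring_scope.

(* In an orthonormal basis {E_a} of the eigenspace, J_n acts on each
   coefficient by J_{1,n} and w(sum f_a E_a, sum h_a E_a) = sum_a W(f_a, h_a).
   So J_n^2 = -1 and the invariance of w are inherited from J_{1,n}, and
   w(Phi, J_n Phi) is a sum of terms W(f_a, J_{1,n} f_a) >= 0, one of them
   positive when Phi <> 0.  An isometry mixes the coefficients by a real
   matrix, which commutes with the real linear map J_{1,n}. *)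

Lemma skew_bilinear_r0 (R : realType) (S : lmodType R) (W : S -> S -> R) :
  skew_bilinear W -> forall x, W x 0 = 0.
Proof.
case=> W_lin _ x; have W_x_sub := zmod_morphism_linear (W_lin x).
by rewrite -(subrr 0) W_x_sub subrr.
Qed.

Section TensorIdentity.
Variables (R : realType) (S : lmodType R) (d : nat) (J1 : S -> S).
Hypothesis J1_linear : linear J1.

HB.instance Definition _ := GRing.isLinear.Build R S S *:%R J1 J1_linear.

Local Notation J := (@Jtensor R S d J1).

Lemma Jtensor_linear : linear J.
Proof. by move=> a Phi Psi; apply/ffunP => i; rewrite !ffunE linearP. Qed.

Lemma complex_structure_Jtensor :
  (forall v, J1 (J1 v) = - v) -> complex_structure J.
Proof.
move=> J1_sqr; split; first exact: Jtensor_linear.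
by move=> Phi; apply/ffunP => i; rewrite !ffunE J1_sqr.
Qed.

Lemma Jtensor_isom_act (O : 'M[R]_d) (Phi : {ffun 'I_d -> S}) :
  J (isom_act O Phi) = isom_act O (J Phi).
Proof.
apply/ffunP => b; rewrite !ffunE linear_sum.
by apply: eq_bigr => a _; rewrite linearZ ffunE.
Qed.

Variable W : S -> S -> R.
Hypotheses (W_skew : skew_bilinear W) (J1_pos : positive_wrt W J1).

Lemma wform_Jtensor (Phi Psi : {ffun 'I_d -> S}) :
  wform W (J Phi) (J Psi) = wform W Phi Psi.
Proof. by apply: eq_bigr => i _; rewrite !ffunE J1_pos.1. Qed.

Lemma positive_wrt_ge0 (x : S) : 0 <= W x (J1 x).
Proof.
have [->|/J1_pos.2/ltW //] := eqVneq x 0.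
by rewrite linear0 skew_bilinear_r0.
Qed.

Lemma wform_Jtensor_gt0 (Phi : {ffun 'I_d -> S}) :
  Phi != 0 -> 0 < wform W Phi (J Phi).
Proof.
move=> Phi_neq0; have [i Phi_i_neq0] : exists i, Phi i != 0.
  apply/existsP; apply: contraNT Phi_neq0 => /existsPn Phi_eq0.
  by apply/eqP/ffunP => i; rewrite ffunE; apply/eqP/negPn.
rewrite /wform (bigD1 i) //= ffunE ltr_pwDl ?(J1_pos.2 _ Phi_i_neq0) //.
by apply: sumr_ge0 => j _; rewrite ffunE positive_wrt_ge0.
Qed.

Lemma positive_wrt_Jtensor : positive_wrt (wform W) J.
Proof. by split; [exact: wform_Jtensor | exact: wform_Jtensor_gt0]. Qed.

End TensorIdentity.

Theorem theorem2 (R : realType) (S : lmodType R) (W : S -> S -> R)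
  (J1 : S -> S) (d : nat) :
  skew_bilinear W ->
  complex_structure J1 ->
  positive_wrt W J1 ->
  complex_structure (@Jtensor R S d J1) /\
  positive_wrt (wform W) (@Jtensor R S d J1) /\
  (forall O : 'M[R]_d, O^T *m O = 1%:M ->
     forall Phi : {ffun 'I_d -> S},
       Jtensor J1 (isom_act O Phi) = isom_act O (Jtensor J1 Phi)).
Proof.
move=> W_skew [J1_linear J1_sqr] J1_pos.
split; first exact: complex_structure_Jtensor.
split; first exact: positive_wrt_Jtensor.
by move=> O _ Phi; exact: Jtensor_isom_act.
Qed.
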